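(* Under the assumptions below, and assuming $\mu$ is sufficiently large, the data $(X_i,U_i)$ are informative for the stabilizability of $A_C$ if and only if, for every $i\in\{1,\dots,N\}$, there exists a right inverse $X_i^{+}$ of $X_i$ (i.e. $X_iX_i^{+}=I$) such that $(X_i\mathcal{D}_{11}-E_iV)X_i^{+}$ is stable (Hurwitz).
   Context: Leader–follower multi-agent system with $N$ followers. Follower $i$: $\dot x_i=A_ix_i+B_iu_i+E_iv$, $e_i=C_ix_i+D_iu_i+F_iv$, with $x_i\in\mathbb{R}^{n_i}$, $u_i\in\mathbb{R}^{m_i}$, $e_i\in\mathbb{R}^{p}$; exosystem $\dot v=Sv$, $v\in\mathbb{R}^q$. The matrices $A_i,B_i,C_i,D_i$ are unknown; $E_i,F_i,S$ are known. Distributed controller: $u_i=K_{1i}x_i+K_{2i}\eta_i$, $\dot\eta_i=S\eta_i+\mu[\sum_j a_{ij}(\eta_j-\eta_i)+a_{i0}(v-\eta_i)]$. The Laplacian of the graph (leader node 0 plus followers) is $\mathcal{L}=\begin{bmatrix}0&0\\-[a_{10},\dots,a_{N0}]^T&H\end{bmatrix}$. The closed-loop matrix is $A_C=\begin{bmatrix}A+BK_1&BK_2\\0&(I_N\otimes S)-\mu(H\otimes I_q)\end{bmatrix}$ with $A=\mathrm{blockdiag}(A_i)$, $B=\mathrm{blockdiag}(B_i)$, $K_1=\mathrm{blockdiag}(K_{1i})$, $K_2=\mathrm{blockdiag}(K_{2i})$. Data: the signals on a time interval are expanded in an orthogonal polynomial basis (e.g. Chebyshev) truncated at degree $N$; $X_i\in\mathbb{R}^{n_i\times(N+1)}$,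 $U_i$, $V$ collect the first $N+1$ coefficient vectors of $x_i,u_i,v$, and $\mathcal{D}_{11}\in\mathbb{R}^{(N+1)\times(N+1)}$ is the leading block of the basis differentiation matrix. Exact data: $X_i\mathcal{D}_{11}=A_iX_i+B_iU_i+E_iV$. The data are informative for the stabilizability of $A_C$ if every $(A,B)$ consistent with the data (i.e. $X\mathcal{D}_{11}=AX+BU+E\bar V$ with stacked data, $\bar V=1_N\otimes V$) admits $K_1,K_2,\mu$ making $A_C$ Hurwitz. Assumptions: $S$ has no eigenvalues with negative real part; the directed weighted graph is unknown but contains a directed spanning tree rooted at the leader; there exist $\varepsilon_1,\varepsilon_2>0$ with $\varepsilon_1\le|\mathcal{L}_{ij}|\le\varepsilon_2$ for all nonzero entries of $\mathcal{L}$. *)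

From HB Require Import structures.
From mathcomp Require Import all_boot all_order all_algebra.
From mathcomp Require Import complex.
Set Implicit Arguments. Unset Strict Implicit. Unset Printing Implicit Defensive.
Import Order.TTheory GRing.Theory Num.Theory.
Local Open Scope ring_scope.

Definition eigenC (R : rcfType) (k : nat) (M : 'M[R]_k) (z : R[i]) : bool :=
  root (char_poly (map_mx (real_complex R) M)) z.

Definition hurwitz (R : rcfType) (k : nat) (M : 'M[R]_k) : Prop :=
  forall z : R[i], eigenC M z -> complex.Re z < 0.

Definition bdiag_blk (R : rcfType) (N : nat) (p r : 'I_N -> nat)
    (F : forall i, 'M[R]_(p i, r i)) (i j : 'I_N) : 'M[R]_(p i, r j) :=
  match i =P j with
  | ReflectT e => castmx (erefl (p i), congr1 r e) (F i)
  | ReflectF _ => 0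
  end.

Definition bdiag (R : rcfType) (N : nat) (p r : 'I_N -> nat)
    (F : forall i, 'M[R]_(p i, r i)) : 'M[R]_(\sum_i p i, \sum_i r i) :=
  \mxblock_(i < N, j < N) bdiag_blk F i j.

(* Graph: a i j = weight of the edge j -> i among followers (i receives
   from j), a0 i = weight of the edge leader -> follower i.
   H is the follower block of the Laplacian L (diagonal of L over followers:
   sum of incoming weights from other followers plus the leader weight). *)
Definition lapH (R : rcfType) (N : nat) (a : 'I_N -> 'I_N -> R) (a0 : 'I_N -> R)
  : 'M[R]_N :=
  \matrix_(i, j) (if i == j then (\sum_(k < N | k != i) a i k) + a0 i
                  else - a i j).

(* Directed edges on the node set {leader = None} U followers. *)
Definition gedge (R : rcfType) (N : nat) (a : 'I_N -> 'I_N -> R) (a0 : 'I_N -> R)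
  : rel (option 'I_N) :=
  fun u v => match u, v with
             | None, Some i => 0 < a0 i
             | Some j, Some i => (j != i) && (0 < a i j)
             | _, _ => false
             end.

(* The graph contains a directed spanning tree rooted at the leader
   (equivalently: every follower is reachable from the leader). *)
Definition spanning_tree_from_leader (R : rcfType) (N : nat)
    (a : 'I_N -> 'I_N -> R) (a0 : 'I_N -> R) : Prop :=
  forall i : 'I_N, connect (gedge a a0) None (Some i).

(* Entrywise bounds on the nonzero entries of the full Laplacian
   L = [0 0; -a0 H] . *)
Definition laplacian_bounds (R : rcfType) (N : nat)
    (a : 'I_N -> 'I_N -> R) (a0 : 'I_N -> R) (eps1 eps2 : R) : Prop :=
  (forall i j, lapH a a0 i j != 0 -> eps1 <= `|lapH a a0 i j| <= eps2) /\
  (forall i, a0 i != 0 -> eps1 <= `|a0 i| <= eps2).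

Definition closed_loop (R : rcfType) (N q : nat) (n m : 'I_N -> nat)
    (A : forall i, 'M[R]_(n i)) (B : forall i, 'M[R]_(n i, m i))
    (K1 : forall i, 'M[R]_(m i, n i)) (K2 : forall i, 'M[R]_(m i, q))
    (S : 'M[R]_q) (H : 'M[R]_N) (mu : R)
  : 'M[R]_((\sum_i n i) + (\sum_(i < N) q)) :=
  block_mx (bdiag A + bdiag B *m bdiag K1) (bdiag B *m bdiag K2)
           0 (bdiag (fun _ : 'I_N => S)
              - mu *: \mxblock_(i < N, j < N) ((H i j)%:M : 'M[R]_q)).

Definition consistent (R : rcfType) (ni mi q T : nat)
    (Xi : 'M[R]_(ni, T)) (Ui : 'M[R]_(mi, T)) (V : 'M[R]_(q, T))
    (D11 : 'M[R]_T) (Ei : 'M[R]_(ni, q))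
    (Ai : 'M[R]_ni) (Bi : 'M[R]_(ni, mi)) : Prop :=
  Xi *m D11 = Ai *m Xi + Bi *m Ui + Ei *m V.

Definition informative (R : rcfType) (N q T : nat) (n m : 'I_N -> nat)
    (X : forall i, 'M[R]_(n i, T)) (U : forall i, 'M[R]_(m i, T))
    (V : 'M[R]_(q, T)) (D11 : 'M[R]_T) (E : forall i, 'M[R]_(n i, q))
    (S : 'M[R]_q) (H : 'M[R]_N) (mu : R) : Prop :=
  exists (K1 : forall i, 'M[R]_(m i, n i)) (K2 : forall i, 'M[R]_(m i, q)),
    forall (A : forall i, 'M[R]_(n i)) (B : forall i, 'M[R]_(n i, m i)),
      (forall i, consistent (X i) (U i) V D11 (E i) (A i) (B i)) ->
      hurwitz (closed_loop A B K1 K2 S H mu).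

(* Sufficiency.  Take K1_i := U_i X_i^+ and K2 := 0.  For every (A_i, B_i)
   consistent with the data, A_i + B_i K1_i = (X_i D11 - E_i V) X_i^+, and A_C is
   block upper triangular, so it is Hurwitz once the observer block
   (I_N ⊗ S) - mu (H ⊗ I_q) is.  If z is an eigenvalue of that block, stacking an
   eigenvector into a matrix W gives W S = (z + mu H^T) W with W <> 0, so by
   Cayley-Hamilton z = s - mu lam for eigenvalues s of S and lam of H.  Now
   Re s <= sum |S_ij|, and Re lam is bounded below by a margin depending only on
   N, eps1, eps2: walking back from a maximal entry of an eigenvector u of H along
   a path of length L < N from the leader, the relative deficit 1 - |u_j| / max |u|
   stays below (Re lam) K^L for a fixed K, while at the child of the leader the
   eigen-equation forces eps1 <= eps2 * deficit + Re lam.  This yields a uniform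
   threshold mu0.

   Necessity.  The data fix (A_i, B_i) only up to perturbations with
   dA X_i + dB U_i = 0.  Unless [I; K1_i] = [X_i; U_i] D, one such perturbation
   shifts A_i + B_i K1_i by c G G^T with G <> 0; for large c the trace becomes
   positive, contradicting stability.  Hence X_i D = I and
   (X_i D11 - E_i V) D = A_i + B_i K1_i is Hurwitz. *)

From HB Require Import structures.
From mathcomp Require Import all_boot all_order all_algebra.
From mathcomp Require Import complex.
From mathcomp.algebra_tactics Require Import ring lra.
Set Implicit Arguments. Unset Strict Implicit. Unset Printing Implicit Defensive.
Import Order.TTheory GRing.Theory Num.Theory.
Local Open Scope ring_scope.
Local Notation "x %:C" := (real_complex _ x) : ring_scope.

Section ComplexModulus.
Variable R : rcfType.
Implicit Types (x y : R[i]) (r : R).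
Local Notation normc := (@Normc.normc R).
Local Notation Re := (@complex.Re R).

Lemma normc_ge0 x : 0 <= normc x.
Proof. exact: (@normr_ge0 _ (Rcomplex R)). Qed.

Lemma normc_eq0 x : (normc x == 0) = (x == 0).
Proof. exact: (@normr_eq0 _ (Rcomplex R)). Qed.

Lemma normc_sum (I : Type) (s : seq I) (P : pred I) (F : I -> R[i]) :
  normc (\sum_(i <- s | P i) F i) <= \sum_(i <- s | P i) normc (F i).
Proof. exact: (@ler_norm_sum _ (Rcomplex R)). Qed.

Lemma normc_real r : normc r%:C = `|r|.
Proof. by rewrite /= expr0n /= addr0 sqrtr_sqr. Qed.

Lemma Re_le_normc x : Re x <= normc x.
Proof.
case: x => a b /=; apply: le_trans (ler_norm a) _.
by rewrite -sqrtr_sqr ler_wsqrtr // lerDl sqr_ge0.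
Qed.

Lemma ReB x y : Re (x - y) = Re x - Re y.
Proof. exact: (@raddfB _ _ (Re : Rcomplex R -> R)). Qed.

Lemma Re_sum (s : seq R[i]) : Re (\sum_(x <- s) x) = \sum_(x <- s) Re x.
Proof. exact: (@raddf_sum _ _ (Re : Rcomplex R -> R)). Qed.

Lemma Re_realM r x : Re (r%:C * x) = r * Re x.
Proof. by case: x => a b /=; rewrite mul0r subr0. Qed.

Lemma exists_max_normc (k : nat) (u : 'I_k -> R[i]) :
  (exists j, u j != 0) ->
  exists j0, 0 < normc (u j0) /\ forall j, normc (u j) <= normc (u j0).
Proof.
move=> [j uj]; have [j0 _ max_j0] := arg_maxP (fun j => normc (u j)) (isT : predT j).
exists j0; split=> [|i]; last exact: max_j0.
by apply: lt_le_trans (max_j0 j isT); rewrite lt_def normc_eq0 uj normc_ge0.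
Qed.

End ComplexModulus.

Lemma char_poly_trmx (T : comNzRingType) (k : nat) (M : 'M[T]_k) :
  char_poly M^T = char_poly M.
Proof.
by rewrite /char_poly -[RHS]det_tr /char_poly_mx linearB /= tr_scalar_mx map_trmx.
Qed.

Lemma char_poly_block_ut (T : comNzRingType) (k l : nat) (P : 'M[T]_k)
    (Q : 'M[T]_(k, l)) (W : 'M[T]_l) :
  char_poly (block_mx P Q 0 W) = char_poly P * char_poly W.
Proof.
rewrite /char_poly /char_poly_mx map_block_mx (scalar_mx_block k l) map_mx0.
by rewrite opp_block_mx add_block_mx oppr0 addr0 det_ublock.
Qed.

Lemma map_mxblock (T1 T2 : Type) (f : T1 -> T2) (k l : nat)
    (p : 'I_k -> nat) (r : 'I_l -> nat) (B : forall i j, 'M[T1]_(p i, r j)) :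
  map_mx f (\mxblock_(i, j) B i j) = \mxblock_(i, j) map_mx f (B i j).
Proof.
apply/mxblockP => i j; rewrite mxblockK.
by rewrite /submxblock -map_mxsub -/(submxblock _ i j) mxblockK.
Qed.

Lemma map_mxdiag (T1 T2 : pzRingType) (f : {rmorphism T1 -> T2}) (k : nat)
    (p : 'I_k -> nat) (P : forall i, 'M[T1]_(p i)) :
  map_mx f (\mxdiag_i P i) = \mxdiag_i map_mx f (P i).
Proof.
rewrite /mxdiag map_mxblock; apply/eq_mxblock => i j.
by case: eqVneq => [->|]; rewrite ?conform_mx_id ?map_mx0.
Qed.

Lemma mxrow_neq0 (T : pzRingType) (k : nat) (p : 'I_k -> nat)
    (v : 'rV[T]_(\sum_i p i)) :
  v != 0 -> exists i, submxrow v i != 0.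
Proof.
move=> v_neq0; apply/existsP; apply: contraR v_neq0 => /existsPn v_i0.
rewrite -(submxrowK v) -(mxrow0 (q_ := p)); apply/eqP/eq_mxrow => i.
exact/eqP/negPn/v_i0.
Qed.

Lemma rV_entry_neq0 (T : pzRingType) (k : nat) (v : 'rV[T]_k) :
  v != 0 -> exists j, v 0 j != 0.
Proof.
move=> v_neq0; apply/existsP; apply: contraR v_neq0 => /existsPn v0.
by apply/eqP/rowP => j; rewrite mxE; apply/eqP/negPn/v0.
Qed.

Lemma submxrowZ (T : pzRingType) (k m : nat) (p : 'I_k -> nat) (c : T)
    (A : 'M[T]_(m, \sum_i p i)) j :
  submxrow (c *: A) j = c *: submxrow A j.
Proof. by apply/matrixP => a b; rewrite !mxE. Qed.

Lemma eigenvalue_mxdiag (F : fieldType) (k : nat) (p : 'I_k -> nat)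
    (P : forall i, 'M[F]_(p i)) (z : F) :
  eigenvalue (\mxdiag_i P i) z = [exists i, eigenvalue (P i) z].
Proof.
apply/eigenvalueP/existsP => [[v v_eig v_neq0]|[i /eigenvalueP[w w_eig w_neq0]]].
  have [i vi_neq0] := mxrow_neq0 v_neq0; exists i; apply/eigenvalueP.
  exists (submxrow v i) => //.
  move/(congr1 (fun A => submxrow A i)): v_eig.
  by rewrite -{1}(submxrowK v) mul_mxrow_mxdiag mxrowK submxrowZ.
pose v := \mxrow_j (if i == j then conform_mx 0 w else 0 : 'rV_(p j)).
exists v.
  rewrite mul_mxrow_mxdiag; apply/mxrowP => j; rewrite submxrowZ !mxrowK.
  by case: eqVneq => [<-|]; rewrite ?conform_mx_id ?w_eig ?mul0mx ?scaler0.
apply: contra w_neq0 => /eqP v0; move/(congr1 (fun A => submxrow A i)): v0.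
by rewrite mxrowK eqxx conform_mx_id submxrow0 => ->.
Qed.

Section ComplexSpectrum.
Variable R : rcfType.
Local Notation Re := (@complex.Re R).
Local Notation toC := (real_complex R).

Lemma eigenCE (k : nat) (M : 'M[R]_k) (z : R[i]) :
  eigenC M z = eigenvalue (map_mx toC M) z.
Proof. by rewrite /eigenC eigenvalue_root_char. Qed.

Lemma eigenC_trmx (k : nat) (M : 'M[R]_k) (z : R[i]) : eigenC M^T z = eigenC M z.
Proof. by rewrite /eigenC -map_trmx char_poly_trmx. Qed.

Lemma eigenC_block_ut (k l : nat) (P : 'M[R]_k) (Q : 'M[R]_(k, l)) (W : 'M[R]_l)
    (z : R[i]) :
  eigenC (block_mx P Q 0 W) z = eigenC P z || eigenC W z.
Proof. by rewrite /eigenC map_block_mx map_mx0 char_poly_block_ut rootM. Qed.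

Lemma eigenC_mxdiag (k : nat) (p : 'I_k -> nat) (P : forall i, 'M[R]_(p i))
    (z : R[i]) :
  eigenC (\mxdiag_i P i) z = [exists i, eigenC (P i) z].
Proof.
rewrite eigenCE map_mxdiag eigenvalue_mxdiag.
by apply: eq_existsb => i; rewrite eigenCE.
Qed.

Lemma hurwitz_block_ut (k l : nat) (P : 'M[R]_k) (Q : 'M[R]_(k, l)) (W : 'M[R]_l) :
  hurwitz (block_mx P Q 0 W) <-> hurwitz P /\ hurwitz W.
Proof.
split=> [hw|[hwP hwW] z]; last by rewrite eigenC_block_ut => /orP[/hwP|/hwW].
by split=> z z_eig; apply: hw; rewrite eigenC_block_ut z_eig ?orbT.
Qed.

Lemma hurwitz_mxdiag (k : nat) (p : 'I_k -> nat) (P : forall i, 'M[R]_(p i)) :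
  hurwitz (\mxdiag_i P i) <-> forall i, hurwitz (P i).
Proof.
split=> [hw i z z_eig|hwP z]; last by rewrite eigenC_mxdiag => /existsP[i /hwP].
by apply: hw; rewrite eigenC_mxdiag; apply/existsP; exists i.
Qed.

Lemma hurwitz_trace_lt0 (k : nat) (M : 'M[R]_k) :
  (0 < k)%N -> hurwitz M -> \tr M < 0.
Proof.
move=> k_gt0 M_hw; set MC := map_mx toC M.
have [rs MC_split] := closed_field_poly_normal (char_poly MC).
rewrite (monicP (char_poly_monic MC)) scale1r in MC_split.
have size_rs : size rs = k.
  by have := size_char_poly MC; rewrite MC_split size_prod_XsubC => -[].
have tr_MC : \tr MC = \sum_(x <- rs) x.
  apply: oppr_inj; rewrite -char_poly_trace // MC_split -coefPn_prod_XsubC.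
    by rewrite size_rs.
  by rewrite size_rs -lt0n.
have Re_lt0 x : x \in rs -> Re x < 0.
  by move=> x_rs; apply: M_hw; rewrite /eigenC -/MC MC_split root_prod_XsubC.
have -> : \tr M = Re (\tr MC) by rewrite /MC trace_map_mx.
rewrite tr_MC Re_sum; case: rs size_rs Re_lt0 {MC_split tr_MC} => [|x rs] size_rs Re_lt0.
  by rewrite -size_rs in k_gt0.
rewrite big_cons -[X in _ < X]addr0 ltr_leD ?Re_lt0 ?mem_head // big_seq.
by apply: sumr_le0 => y y_rs; rewrite ltW // Re_lt0 // inE y_rs orbT.
Qed.

Lemma Re_eigenC_le_sum_norm (q : nat) (S : 'M[R]_q) (s : R[i]) :
  eigenC S s -> Re s <= \sum_i \sum_j `|S i j|.
Proof.
rewrite eigenCE => /eigenvalueP[v v_eig v_neq0].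
have [j0 [v_j0_gt0 v_j0_max]] : exists j0, 0 < Normc.normc (v 0 j0) /\
    forall j, Normc.normc (v 0 j) <= Normc.normc (v 0 j0).
  exact: exists_max_normc (rV_entry_neq0 v_neq0).
have s_v_j0 : s * v 0 j0 = \sum_i v 0 i * (S i j0)%:C.
  move/(congr1 (fun A : 'rV_q => A 0 j0)): v_eig; rewrite !mxE => <-.
  by apply: eq_bigr => i _; rewrite mxE.
have normc_s : Normc.normc s <= \sum_i `|S i j0|.
  rewrite -(ler_pM2r v_j0_gt0) mulr_suml -Normc.normcM s_v_j0.
  apply: le_trans (normc_sum _ _ _) _; apply: ler_sum => i _.
  by rewrite Normc.normcM normc_real mulrC ler_wpM2l.
apply: le_trans (Re_le_normc s) (le_trans normc_s _); apply: ler_sum => i _.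
by rewrite (bigD1 j0) //= lerDl sumr_ge0.
Qed.

End ComplexSpectrum.

Section ClosedLoop.
Variables (R : rcfType) (N q : nat).

Lemma bdiag_blk_diag (p r : 'I_N -> nat) (F : forall i, 'M[R]_(p i, r i)) i :
  bdiag_blk F i i = F i.
Proof.
by rewrite /bdiag_blk; case: eqP => // e; rewrite (eq_irrelevance e erefl) castmx_id.
Qed.

Lemma bdiag_blk_offdiag (p r : 'I_N -> nat) (F : forall i, 'M[R]_(p i, r i)) i j :
  i != j -> bdiag_blk F i j = 0.
Proof. by rewrite /bdiag_blk; case: eqP. Qed.

Lemma bdiag_mxdiag (p : 'I_N -> nat) (F : forall i, 'M[R]_(p i)) :
  bdiag F = \mxdiag_i F i.
Proof.
apply/eq_mxblock => i j; case: eqVneq => [<-|ij].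
  by rewrite bdiag_blk_diag conform_mx_id.
exact: bdiag_blk_offdiag.
Qed.

Lemma mul_bdiag (p r s : 'I_N -> nat) (B : forall i, 'M[R]_(p i, r i))
    (K : forall i, 'M[R]_(r i, s i)) :
  bdiag B *m bdiag K = bdiag (fun i => B i *m K i).
Proof.
rewrite /bdiag mul_mxblock; apply/eq_mxblock => i j.
rewrite (bigD1 i) //= big1 ?addr0 => [|k ki]; last first.
  by rewrite bdiag_blk_offdiag ?mul0mx // eq_sym.
rewrite bdiag_blk_diag; case: (eqVneq i j) => [<-|ij]; first by rewrite !bdiag_blk_diag.
by rewrite !bdiag_blk_offdiag // mulmx0.
Qed.

Definition observer_mx (S : 'M[R]_q) (H : 'M[R]_N) (mu : R) :
    'M[R]_(\sum_(i < N) q) :=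
  \mxdiag_(i < N) S - mu *: \mxblock_(i < N, j < N) ((H i j)%:M : 'M[R]_q).

Variables (n m : 'I_N -> nat) (A : forall i, 'M[R]_(n i))
  (B : forall i, 'M[R]_(n i, m i)) (K1 : forall i, 'M[R]_(m i, n i))
  (K2 : forall i, 'M[R]_(m i, q)) (S : 'M[R]_q) (H : 'M[R]_N) (mu : R).

Lemma closed_loop_block_ut :
  closed_loop A B K1 K2 S H mu =
  block_mx (\mxdiag_i (A i + B i *m K1 i)) (bdiag B *m bdiag K2) 0
           (observer_mx S H mu).
Proof. by rewrite /closed_loop mul_bdiag !bdiag_mxdiag mxdiagD. Qed.

Lemma hurwitz_closed_loop :
  hurwitz (closed_loop A B K1 K2 S H mu) <->
  (forall i, hurwitz (A i + B i *m K1 i)) /\ hurwitz (observer_mx S H mu).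
Proof. by rewrite closed_loop_block_ut hurwitz_block_ut hurwitz_mxdiag. Qed.

End ClosedLoop.

Lemma horner_mx_intertwine (T : comNzRingType) (k l : nat) (A : 'M[T]_k.+1)
    (B : 'M[T]_l.+1) (W : 'M[T]_(l.+1, k.+1)) (p : {poly T}) :
  W *m A = B *m W -> W *m horner_mx A p = horner_mx B p *m W.
Proof.
move=> WA; elim/poly_ind: p => [|p c IHp]; first by rewrite !rmorph0 mulmx0 mul0mx.
rewrite !rmorphD !rmorphM /= !horner_mx_X !horner_mx_C -!mulmxE.
by rewrite mulmxDr mulmxDl mulmxA IHp -!mulmxA WA mul_mx_scalar mul_scalar_mx.
Qed.

Lemma intertwiner_common_eigenvalue (F : closedFieldType) (k l : nat)
    (A : 'M[F]_k) (B : 'M[F]_l) (W : 'M[F]_(l, k)) :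
  W != 0 -> W *m A = B *m W -> exists s, eigenvalue A s /\ eigenvalue B s.
Proof.
case: k A W => [|k] A W; first by rewrite thinmx0 eqxx.
case: l B W => [|l] B W; first by rewrite flatmx0 eqxx.
move=> W_neq0 WA; have [rs A_split] := closed_field_poly_normal (char_poly A).
rewrite (monicP (char_poly_monic A)) scale1r in A_split.
have : ~~ (horner_mx B (char_poly A) \in unitmx).
  apply: contra W_neq0 => hB_unit.
  by rewrite -(mulKmx hB_unit W) -(horner_mx_intertwine _ WA) Cayley_Hamilton !mulmx0.
rewrite A_split rmorph_prod => hB_nunit.
have /hasP[s s_rs] : has (fun s => ~~ (B - s%:M \in unitmx)) rs.
  apply: contraR hB_nunit => /hasPn all_unit; apply: unitr_prod_in => s s_rs _.
  by have := all_unit s s_rs; rewrite rmorphB /= horner_mx_X horner_mx_C negbK.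
rewrite unitmxE unitfE negbK => /det0P[v v_neq0 v_ker].
exists s; split; first by rewrite eigenvalue_root_char A_split root_prod_XsubC.
apply/eigenvalueP; exists v => //.
by apply/eqP; rewrite -subr_eq0 -mul_mx_scalar -mulmxBr v_ker.
Qed.

Lemma eigenvalue_shift_scale (F : fieldType) (k : nat) (M : 'M[F]_k) (a c s : F) :
  c != 0 -> eigenvalue (a%:M + c *: M) s -> eigenvalue M ((s - a) / c).
Proof.
move=> c_neq0 /eigenvalueP[w w_eig w_neq0]; apply/eigenvalueP; exists w => //.
move: w_eig; rewrite mulmxDr mul_mx_scalar -scalemxAr => /(canRL (addKr _)) w_eig.
by apply: (scalerI c_neq0); rewrite w_eig scalerA mulrC divfK // scalerBl addrC.
Qed.

Section ObserverSpectrum.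
Variables (R : rcfType) (N q : nat) (S : 'M[R]_q) (H : 'M[R]_N) (mu : R).
Local Notation toC := (real_complex R).

(* Stacking the q-blocks of an eigenvector of (I_N ⊗ S) - mu (H ⊗ I_q) as the rows
   of W turns the eigen-equation into a Sylvester equation for W. *)
Lemma observer_eigvec_intertwiner (z : R[i]) (v : 'rV_(\sum_(i < N) q)) :
  v != 0 -> v *m map_mx toC (observer_mx S H mu) = z *: v ->
  exists2 W : 'M_(N, q), W != 0 &
    W *m map_mx toC S = (z%:M + mu%:C *: (map_mx toC H)^T) *m W.
Proof.
rewrite /observer_mx map_mxB map_mxZ map_mxdiag map_mxblock => v_neq0 v_eig.
set SC := map_mx toC S in v_eig *; set HC := map_mx toC H; set c := mu%:C in v_eig *.
have [W W_row] : {W : 'M_(N, q) | forall j, row j W = submxrow v j}.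
  by exists (\matrix_j submxrow v j) => j; rewrite rowK.
have vD : v *m \mxdiag_(i < N) SC = \mxrow_j (submxrow v j *m SC).
  by rewrite -mul_mxrow_mxdiag submxrowK.
have vH : v *m \mxblock_(i, j) map_mx toC ((H i j)%:M : 'M_q) =
          \mxrow_j \sum_i HC i j *: submxrow v i.
  rewrite -{1}(submxrowK v) mul_mxrow_mxblock; apply: eq_mxrow => j.
  by apply: eq_bigr => i _; rewrite map_scalar_mx mul_mx_scalar mxE.
have v_blocks j :
    submxrow v j *m SC = z *: submxrow v j + c *: \sum_i HC i j *: submxrow v i.
  move/(congr1 (fun A => submxrow A j)): v_eig.
  rewrite mulmxBr -scalemxAr vD vH submxrowB !submxrowZ !mxrowK.
  by move/(canRL (subrK _)); rewrite addrC.
exists W.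
  have [j vj_neq0] := mxrow_neq0 v_neq0.
  by apply: contra vj_neq0 => /eqP W0; rewrite -W_row W0 row0.
apply/row_matrixP => j; rewrite row_mul W_row v_blocks row_mul mulmx_sum_row.
under [RHS]eq_bigr do rewrite W_row !mxE scalerDl -scalerA.
rewrite big_split /= -scaler_sumr; congr (_ + _); last by under eq_bigr do rewrite mxE.
rewrite (bigD1 j) //= eqxx mulr1n big1 ?addr0 // => i ij.
by rewrite eq_sym (negbTE ij) mulr0n scale0r.
Qed.

Lemma eigenC_observer (z : R[i]) :
  mu != 0 -> eigenC (observer_mx S H mu) z ->
  exists s lam, [/\ eigenC S s, eigenC H lam & z = s - mu%:C * lam].
Proof.
rewrite eigenCE => mu_neq0 /eigenvalueP[v v_eig v_neq0].
have [W W_neq0 W_eq] := observer_eigvec_intertwiner v_neq0 v_eig.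
have [s [s_eigS s_eigG]] := intertwiner_common_eigenvalue W_neq0 W_eq.
have c_neq0 : mu%:C != 0 by rewrite fmorph_eq0.
exists s, ((s - z) / mu%:C); split; first by rewrite eigenCE.
  by rewrite -eigenC_trmx eigenCE -map_trmx; apply: eigenvalue_shift_scale.
by rewrite mulrC divfK // opprB addrC subrK.
Qed.

End ObserverSpectrum.

(* If the relative deficit 1 - |u_i| / max |u| of an eigenvector u of H is at most
   r K^L at node i, where r >= Re of the eigenvalue, it is at most r K^(L+1) at every
   in-neighbour of i. *)
Definition deficit_ratio (R : numFieldType) (eps1 eps2 : R) := (eps2 + 1) / eps1.

Definition spectral_margin (R : numFieldType) (N : nat) (eps1 eps2 : R) :=
  eps1 / (eps2 * deficit_ratio eps1 eps2 ^+ N + 1).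

Section LaplacianSpectrum.
Variables (R : rcfType) (N : nat) (a : 'I_N -> 'I_N -> R) (a0 : 'I_N -> R)
  (eps1 eps2 : R).
Hypotheses (eps1_gt0 : 0 < eps1) (eps1_le_eps2 : eps1 <= eps2)
  (a_ge0 : forall i j, 0 <= a i j) (a0_ge0 : forall i, 0 <= a0 i)
  (tree : spanning_tree_from_leader a a0)
  (bounds : laplacian_bounds a a0 eps1 eps2).

Local Notation H := (lapH a a0).
Local Notation indeg i := (\sum_(k < N | k != i) a i k).
Local Notation K := (deficit_ratio eps1 eps2).

Lemma lapH_diag i : H i i = indeg i + a0 i.
Proof. by rewrite mxE eqxx. Qed.

Lemma lapH_offdiag i j : j != i -> H i j = - a i j.
Proof. by rewrite mxE eq_sym => /negbTE ->. Qed.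

Lemma indeg_ge0 i : 0 <= indeg i.
Proof. exact: sumr_ge0. Qed.

Lemma edge_le_indeg i j : j != i -> a i j <= indeg i.
Proof. by move=> ji; rewrite (bigD1 j) //= lerDl sumr_ge0. Qed.

Lemma lapH_diag_le i : indeg i + a0 i <= eps2.
Proof.
rewrite -lapH_diag; have [->|hii_neq0] := eqVneq (H i i) 0.
  exact: le_trans (ltW eps1_gt0) eps1_le_eps2.
case: bounds => /(_ i i hii_neq0)/andP[_].
by rewrite ger0_norm // lapH_diag addr_ge0 ?indeg_ge0.
Qed.

Lemma edge_ge i j : j != i -> 0 < a i j -> eps1 <= a i j.
Proof.
move=> ji a_gt0; case: bounds => /(_ i j) + _; rewrite lapH_offdiag // oppr_eq0.
by rewrite gt_eqF // normrN gtr0_norm // => /(_ isT)/andP[].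
Qed.

Lemma leader_edge_ge i : 0 < a0 i -> eps1 <= a0 i.
Proof.
move=> a0_gt0; case: bounds => _ /(_ i).
by rewrite gt_eqF // gtr0_norm // => /(_ isT)/andP[].
Qed.

Lemma deficit_ratio_ge1 : 1 <= K.
Proof. by rewrite /deficit_ratio ler_pdivlMr // mul1r (le_trans eps1_le_eps2) ?lerDl. Qed.

Lemma margin_denom_ge1 : 1 <= eps2 * K ^+ N + 1.
Proof.
have eps2_ge0 : 0 <= eps2 := le_trans (ltW eps1_gt0) eps1_le_eps2.
by rewrite lerDr mulr_ge0 // exprn_ge0 // (le_trans ler01 deficit_ratio_ge1).
Qed.

Lemma spectral_margin_gt0 : 0 < spectral_margin N eps1 eps2.
Proof. by rewrite divr_gt0 // (lt_le_trans ltr01 margin_denom_ge1). Qed.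

Lemma leader_short_path j0 : exists i p, [/\ 0 < a0 i,
  path (gedge a a0) (Some i) p, last (Some i) p = Some j0 & (size p < N)%N].
Proof.
have /connectP[p p_path p_last] := tree j0.
case: (shortenP p_path) p_last => [[|[i|] p'] //] + p'_uniq _ p'_last.
move=> /= /andP[a0_gt0 p'_path]; exists i, p'; split=> //.
have := max_card (mem [:: None, Some i & p']).
by rewrite card_option card_ord (card_uniqP p'_uniq).
Qed.

Section EigenvectorDecay.
Variables (lam : R[i]) (u : 'I_N -> R[i]) (r : R) (j0 : 'I_N).
Local Notation nu i := (Normc.normc (u i)).
Local Notation M := (nu j0).
Hypotheses (u_eig : forall i, \sum_k (H i k)%:C * u k = lam * u i)
  (nu_le_M : forall j, nu j <= M) (M_gt0 : 0 < M)
  (r_ge0 : 0 <= r) (Re_lam_le : complex.Re lam <= r) (r_le_eps1 : r <= eps1).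

Lemma eigvec_row i :
  ((indeg i + a0 i)%:C - lam) * u i = \sum_(k < N | k != i) (a i k)%:C * u k.
Proof.
have := u_eig i; rewrite (bigD1 i) //= lapH_diag.
rewrite (eq_bigr (fun k => - ((a i k)%:C * u k))) => [|k ki]; last first.
  by rewrite lapH_offdiag // rmorphN mulNr.
by rewrite sumrN mulrBl => <-; rewrite opprD addNKr opprK.
Qed.

Lemma eigvec_row_normc i :
  (indeg i + a0 i - r) * nu i <= \sum_(k < N | k != i) a i k * nu k.
Proof.
have drift : indeg i + a0 i - r <= Normc.normc ((indeg i + a0 i)%:C - lam).
  by apply: le_trans (Re_le_normc _); rewrite ReB lerB.
apply: le_trans (ler_wpM2r (normc_ge0 _) drift) _.
rewrite -Normc.normcM eigvec_row; apply: le_trans (normc_sum _ _ _) _.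
by apply: ler_sum => k _; rewrite Normc.normcM normc_real ger0_norm.
Qed.

Lemma eigvec_row_deficit i t : r <= indeg i + a0 i -> 0 <= t ->
  M * (1 - t) <= nu i ->
  M * (indeg i + a0 i - r - eps2 * t) <= \sum_(k < N | k != i) a i k * nu k.
Proof.
move=> r_le_h t_ge0 nu_i_ge; apply: le_trans (eigvec_row_normc i).
have lower : (indeg i + a0 i - r) * (M * (1 - t)) <= (indeg i + a0 i - r) * nu i.
  by rewrite ler_wpM2l // subr_ge0.
have drift : M * ((indeg i + a0 i - r) * t) <= M * (eps2 * t).
  rewrite ler_wpM2l ?ler_wpM2r ?(ltW M_gt0) //.
  by rewrite lerBlDr (le_trans (lapH_diag_le i)) ?lerDl.
lra.
Qed.

Lemma eigvec_deficit_across_edge i j t : j != i -> 0 < a i j -> 0 <= t ->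
  M * (1 - t) <= nu i -> eps1 * (M - nu j) <= M * (eps2 * t + r).
Proof.
move=> ji a_gt0 t_ge0 nu_i_ge.
have eps1_le_a := edge_ge ji a_gt0; have a_le_indeg := edge_le_indeg ji.
have r_le_h : r <= indeg i + a0 i.
  by rewrite (le_trans r_le_eps1) // (le_trans eps1_le_a) // (le_trans a_le_indeg) ?lerDl.
have row := eigvec_row_deficit r_le_h t_ge0 nu_i_ge.
have others : \sum_(k < N | k != i) a i k * nu k <= (indeg i - a i j) * M + a i j * nu j.
  rewrite (bigD1 j) //= [X in _ <= (X - _) * _ + _](bigD1 j) //= addrAC subrr add0r.
  by rewrite addrC mulr_suml lerD2r; apply: ler_sum => k _; rewrite ler_wpM2l.
have weight : eps1 * (M - nu j) <= a i j * (M - nu j).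
  by rewrite ler_wpM2r // subr_ge0.
have a0M : 0 <= M * a0 i by rewrite mulr_ge0 ?(ltW M_gt0).
lra.
Qed.

Lemma eigvec_deficit_at_leader_edge i t : 0 < a0 i -> 0 <= t ->
  M * (1 - t) <= nu i -> eps1 <= eps2 * t + r.
Proof.
move=> a0_gt0 t_ge0 nu_i_ge.
have eps1_le_a0 := leader_edge_ge a0_gt0.
have r_le_h : r <= indeg i + a0 i.
  by rewrite (le_trans r_le_eps1) // (le_trans eps1_le_a0) // lerDr indeg_ge0.
have row := eigvec_row_deficit r_le_h t_ge0 nu_i_ge.
have others : \sum_(k < N | k != i) a i k * nu k <= indeg i * M.
  by rewrite mulr_suml; apply: ler_sum => k _; rewrite ler_wpM2l.
have weight : M * eps1 <= M * a0 i by rewrite ler_wpM2l ?(ltW M_gt0).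
rewrite -(ler_pM2l M_gt0); lra.
Qed.

Lemma eigvec_deficit_along_path p j : path (gedge a a0) (Some j) p ->
  last (Some j) p = Some j0 -> M * (1 - r * K ^+ size p) <= nu j.
Proof.
elim: p j => [|[i|] p IHp] j //=.
  move=> _ [->]; have := mulr_ge0 (ltW M_gt0) r_ge0; lra.
move=> /andP[/andP[ji a_gt0] p_path] p_last.
have K_ge1 := deficit_ratio_ge1.
have P_ge1 : 1 <= K ^+ size p by rewrite exprn_ege1.
have t_ge0 : 0 <= r * K ^+ size p by rewrite mulr_ge0 // (le_trans ler01).
have := eigvec_deficit_across_edge ji a_gt0 t_ge0 (IHp i p_path p_last).
have eps1K : eps1 * K = eps2 + 1 by rewrite /deficit_ratio mulrC divfK ?gt_eqF.
have : 0 <= M * r * (K ^+ size p - 1) by rewrite !mulr_ge0 ?(ltW M_gt0) ?subr_ge0.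
rewrite -(ler_pM2l eps1_gt0) exprS.
have -> : eps1 * (M * (1 - r * (K * K ^+ size p))) =
          eps1 * M - M * r * K ^+ size p * (eps1 * K) by ring.
rewrite eps1K; lra.
Qed.

Lemma eps1_le_eigvec_bound : eps1 <= r * (eps2 * K ^+ N + 1).
Proof.
have [i [p [a0_gt0 p_path p_last p_short]]] := leader_short_path j0.
have K_ge1 := deficit_ratio_ge1.
have t_ge0 : 0 <= r * K ^+ size p by rewrite mulr_ge0 // exprn_ge0 // (le_trans ler01).
have := eigvec_deficit_along_path p_path p_last.
move/(eigvec_deficit_at_leader_edge a0_gt0 t_ge0).
have : K ^+ size p <= K ^+ N by rewrite ler_weXn2l // ltnW.
have : 0 <= eps2 * r by rewrite mulr_ge0 // (le_trans (ltW eps1_gt0)).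
nra.
Qed.

End EigenvectorDecay.

Lemma spectral_margin_le_Re_eigenC (lam : R[i]) :
  eigenC H lam -> spectral_margin N eps1 eps2 <= complex.Re lam.
Proof.
rewrite -eigenC_trmx eigenCE => /eigenvalueP[v v_eig v_neq0].
have u_eig i : \sum_k (H i k)%:C * v 0 k = lam * v 0 i.
  move/(congr1 (fun A : 'rV_N => A 0 i)): v_eig; rewrite !mxE => <-.
  by apply: eq_bigr => k _; rewrite !mxE mulrC.
have [j0 [M_gt0 nu_le_M]] := exists_max_normc (rV_entry_neq0 v_neq0).
have D_ge1 := margin_denom_ge1.
rewrite /spectral_margin ler_pdivrMr ?(lt_le_trans ltr01) //.
have [eps1_lt|Re_le_eps1] := ltrP eps1 (complex.Re lam).
  apply: le_trans (ltW eps1_lt) _; rewrite ler_peMr //.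
  exact: ltW (lt_trans eps1_gt0 eps1_lt).
have [Re_lt0|Re_ge0] := ltrP (complex.Re lam) 0.
  have := eps1_le_eigvec_bound u_eig nu_le_M M_gt0 (lexx 0) (ltW Re_lt0) (ltW eps1_gt0).
  by rewrite mul0r leNgt eps1_gt0.
exact: eps1_le_eigvec_bound u_eig nu_le_M M_gt0 Re_ge0 (lexx _) Re_le_eps1.
Qed.

End LaplacianSpectrum.

Definition observer_gain_bound (R : rcfType) (N q : nat) (S : 'M[R]_q) (eps1 eps2 : R) :=
  (\sum_i \sum_j `|S i j| + 1) / spectral_margin N eps1 eps2.

Lemma observer_mx_hurwitz (R : rcfType) (N q : nat) (S : 'M[R]_q)
    (a : 'I_N -> 'I_N -> R) (a0 : 'I_N -> R) (eps1 eps2 mu : R) :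
  0 < eps1 -> eps1 <= eps2 ->
  (forall i j, 0 <= a i j) -> (forall i, 0 <= a0 i) ->
  spanning_tree_from_leader a a0 -> laplacian_bounds a a0 eps1 eps2 ->
  observer_gain_bound N S eps1 eps2 <= mu -> hurwitz (observer_mx S (lapH a a0) mu).
Proof.
move=> eps1_gt0 eps1_le_eps2 a_ge0 a0_ge0 tree bounds mu_ge z z_eig.
have c_gt0 := spectral_margin_gt0 N eps1_gt0 eps1_le_eps2.
have sigma_ge0 : 0 <= \sum_i \sum_j `|S i j|.
  by rewrite !sumr_ge0 // => i _; rewrite sumr_ge0.
have mu_gt0 : 0 < mu.
  by apply: lt_le_trans mu_ge; rewrite divr_gt0 // ltr_wpDl.
have [s [lam [s_eig lam_eig ->]]] := eigenC_observer (lt0r_neq0 mu_gt0) z_eig.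
have Re_s := Re_eigenC_le_sum_norm s_eig.
have Re_lam :=
  spectral_margin_le_Re_eigenC eps1_gt0 eps1_le_eps2 a_ge0 a0_ge0 tree bounds lam_eig.
have mu_margin : \sum_i \sum_j `|S i j| + 1 <= mu * spectral_margin N eps1 eps2.
  by rewrite -ler_pdivrMr.
have : mu * spectral_margin N eps1 eps2 <= mu * complex.Re lam by rewrite ler_pM2l.
by rewrite ReB Re_realM; lra.
Qed.

Lemma mxtrace_mul_tr_gt0 (F : realDomainType) (k l : nat) (G : 'M[F]_(k, l)) :
  G != 0 -> 0 < \tr (G *m G^T).
Proof.
move=> G_neq0; have [[i j] Gij_neq0] : exists ij : 'I_k * 'I_l, G ij.1 ij.2 != 0.
  apply/existsP; apply: contraR G_neq0 => /existsPn G0.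
  by apply/eqP/matrixP => i j; rewrite mxE; apply/eqP/negPn/(G0 (i, j)).
have -> : \tr (G *m G^T) = \sum_i \sum_j G i j ^+ 2.
  by apply: eq_bigr => i' _; rewrite mxE; apply: eq_bigr => j' _; rewrite mxE expr2.
rewrite (bigD1 i) //= (bigD1 j) //= -addrA ltr_pwDl //.
  by rewrite lt_def sqrf_eq0 Gij_neq0 sqr_ge0.
by apply: addr_ge0; apply: sumr_ge0 => *; rewrite ?sumr_ge0 // => *; apply: sqr_ge0.
Qed.

Lemma hurwitz_ray_trace_le0 (R : rcfType) (k : nat) (M P : 'M[R]_k) :
  (0 < k)%N -> (forall c, 0 <= c -> hurwitz (M + c *: P)) -> \tr P <= 0.
Proof.
move=> k_gt0 hw; rewrite leNgt; apply/negP => trP_gt0.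
have c_ge0 : 0 <= (`|\tr M| + 1) / \tr P by rewrite divr_ge0 ?ltW ?ltr_wpDl.
have := hurwitz_trace_lt0 k_gt0 (hw _ c_ge0).
rewrite mxtraceD mxtraceZ divfK ?gt_eqF //.
by have := ler_norm (- \tr M); rewrite normrN; lra.
Qed.

Section FeedbackFromData.
Variables (F : fieldType) (n m T : nat) (X : 'M[F]_(n, T)) (U : 'M[F]_(m, T))
  (K : 'M[F]_(m, n)).
Local Notation C := (cokermx (col_mx X U)^T).

(* Vanishes exactly when [I; K] = [X; U] D for some D. *)
Definition feedback_defect : 'M[F]_(n, n + m) := row_mx 1%:M K^T *m C.

Definition defect_gain : 'M[F]_(n, n + m) := feedback_defect *m C^T.

Lemma defect_gain_annihilates :
  lsubmx defect_gain *m X + rsubmx defect_gain *m U = 0.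
Proof.
rewrite -mul_row_col hsubmxK /defect_gain -mulmxA -(trmxK (C^T *m _)) trmx_mul.
by rewrite trmxK mulmx_coker trmx0 mulmx0.
Qed.

Lemma defect_gain_feedback :
  lsubmx defect_gain + rsubmx defect_gain *m K = feedback_defect *m feedback_defect^T.
Proof.
rewrite -[lsubmx _]mulmx1 -mul_row_col hsubmxK /defect_gain -mulmxA; congr (_ *m _).
by rewrite /feedback_defect [RHS]trmx_mul tr_row_mx trmx1 trmxK.
Qed.

Lemma feedback_defect_eq0 :
  feedback_defect = 0 -> exists D, X *m D = 1%:M /\ U *m D = K.
Proof.
move=> defect0; have /submxP[D def_D] : (row_mx 1%:M K^T <= (col_mx X U)^T)%MS.
  by rewrite submxE -/feedback_defect defect0.
exists D^T; apply: eq_col_mx; rewrite -mul_col_mx -[col_mx X U]trmxK -trmx_mul.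
by rewrite -def_D tr_row_mx trmx1 trmxK.
Qed.

End FeedbackFromData.

Lemma consistent_perturb (R : rcfType) (n m q T : nat) (X : 'M[R]_(n, T))
    (U : 'M[R]_(m, T)) (V : 'M[R]_(q, T)) (D11 : 'M[R]_T) (E : 'M[R]_(n, q))
    (A dA : 'M[R]_n) (B dB : 'M[R]_(n, m)) :
  consistent X U V D11 E A B -> dA *m X + dB *m U = 0 ->
  consistent X U V D11 E (A + dA) (B + dB).
Proof. by rewrite /consistent => -> dZ; rewrite !mulmxDl addrACA dZ addr0. Qed.

Section Informativity.
Variables (R : rcfType) (N q T : nat) (n m : 'I_N -> nat)
  (X : forall i, 'M[R]_(n i, T)) (U : forall i, 'M[R]_(m i, T))
  (V : 'M[R]_(q, T)) (D11 : 'M[R]_T) (E : forall i, 'M[R]_(n i, q))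
  (S : 'M[R]_q) (H : 'M[R]_N) (mu : R).

Lemma informative_right_inverse :
  (forall i, exists (Ai : 'M[R]_(n i)) (Bi : 'M[R]_(n i, m i)),
      consistent (X i) (U i) V D11 (E i) Ai Bi) ->
  informative X U V D11 E S H mu ->
  forall i, exists Xp : 'M[R]_(T, n i),
    X i *m Xp = 1%:M /\ hurwitz ((X i *m D11 - E i *m V) *m Xp).
Proof.
move=> /fin_all_exists[A0 /fin_all_exists[B0 cons0]] [K1 [K2 stab]].
pose G i := feedback_defect (X i) (U i) (K1 i).
pose P i := defect_gain (X i) (U i) (K1 i).
have ray_hw (c : R) i : hurwitz (A0 i + B0 i *m K1 i + c *: (G i *m (G i)^T)).
  have cP_annihilates j :
      (c *: lsubmx (P j)) *m X j + (c *: rsubmx (P j)) *m U j = 0.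
    by rewrite -!scalemxAl -scalerDr defect_gain_annihilates scaler0.
  have cons_c j := consistent_perturb (cons0 j) (cP_annihilates j).
  have [/(_ i) + _] := (hurwitz_closed_loop _ _ _ _ _ _ _).1 (stab _ _ cons_c).
  by rewrite mulmxDl addrACA -scalemxAl -scalerDr defect_gain_feedback.
move=> i; have G0 : G i = 0.
  have [n0|n_gt0] := posnP (n i).
    by apply/matrixP => x; have := ltn_ord x; rewrite [k in (_ < k)%N]n0.
  apply/eqP; apply: contraT => G_neq0.
  have := hurwitz_ray_trace_le0 n_gt0 (fun c _ => ray_hw c i).
  by rewrite leNgt mxtrace_mul_tr_gt0.
have [D [XD UD]] := feedback_defect_eq0 G0.
exists D; split => //; have := ray_hw 0 i; rewrite scale0r addr0.
by rewrite (cons0 i) addrK mulmxDl -!mulmxA XD UD mulmx1.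
Qed.

Lemma right_inverse_informative :
  hurwitz (observer_mx S H mu) ->
  (forall i, exists Xp : 'M[R]_(T, n i),
     X i *m Xp = 1%:M /\ hurwitz ((X i *m D11 - E i *m V) *m Xp)) ->
  informative X U V D11 E S H mu.
Proof.
move=> obs_hw /fin_all_exists[Xp XpP].
exists (fun i => U i *m Xp i), (fun i => 0) => A B cons.
apply/hurwitz_closed_loop; split => // i; have [XXp hw] := XpP i.
by move: hw; rewrite (cons i) addrK mulmxDl -!mulmxA XXp mulmx1.
Qed.

End Informativity.

Theorem theorem1 (R : rcfType) (N q : nat) (S : 'M[R]_q) (eps1 eps2 : R) :
  (forall z : R[i], eigenC S z -> 0 <= complex.Re z) ->
  0 < eps1 -> eps1 <= eps2 ->
  exists mu0 : R, forall mu : R, mu0 <= mu ->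
  forall (a : 'I_N -> 'I_N -> R) (a0 : 'I_N -> R),
    (forall i j, 0 <= a i j) -> (forall i, 0 <= a0 i) ->
    spanning_tree_from_leader a a0 ->
    laplacian_bounds a a0 eps1 eps2 ->
  forall (n m : 'I_N -> nat) (d : nat)
    (X : forall i, 'M[R]_(n i, d.+1)) (U : forall i, 'M[R]_(m i, d.+1))
    (V : 'M[R]_(q, d.+1)) (D11 : 'M[R]_(d.+1)) (E : forall i, 'M[R]_(n i, q)),
    (forall i, exists (Ai : 'M[R]_(n i)) (Bi : 'M[R]_(n i, m i)),
        consistent (X i) (U i) V D11 (E i) Ai Bi) ->
    informative X U V D11 E S (lapH a a0) mu <->
    (forall i, exists Xp : 'M[R]_(d.+1, n i),
        X i *m Xp = 1%:M /\ hurwitz ((X i *m D11 - E i *m V) *m Xp)).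
Proof.
move=> _ eps1_gt0 eps1_le_eps2; exists (observer_gain_bound N S eps1 eps2).
move=> mu mu_ge a a0 a_ge0 a0_ge0 tree bounds n m d X U V D11 E data; split.
  exact: informative_right_inverse.
by apply: right_inverse_informative; apply: observer_mx_hurwitz mu_ge.
Qed.
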